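(* For any $a,b>0$, \[ a\sharp b+\gamma(a,b)\,L(a,b)\le a\nabla b,\qquad\text{where}\qquad \gamma(a,b):=\frac{\ln^{2}(b/a)}{2\left(\ln^{2}(b/a)+4\right)}\ \ (\ge 0). \]
   Context: $a\sharp b=\sqrt{ab}$, $a\nabla b=\frac{a+b}{2}$, and $L(a,b)=\frac{b-a}{\ln b-\ln a}$ for $a\ne b$ is the logarithmic mean, with the usual convention $L(a,a)=a$. *)

From Stdlib Require Import Reals.
Open Scope R_scope.

Definition gmean (a b : R) : R := sqrt (a * b).
Definition amean (a b : R) : R := (a + b) / 2.
Definition logmean (a b : R) : R :=
  if Req_EM_T a b then a else (b - a) / (ln b - ln a).
Definition gamma_coef (a b : R) : R :=
  (ln (b / a)) ^ 2 / (2 * ((ln (b / a)) ^ 2 + 4)).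

(** With [t = ln b - ln a], the inequality says [t (b - a) <= (t^2 + 4) (sqrt b - sqrt a)^2],
    which is symmetric in [a] and [b].  For [a < b], put [x = t / 2], so that
    [exp x = sqrt b / sqrt a]; dividing by [sqrt a * (sqrt b - sqrt a)] reduces it to
    [x (exp x + 1) <= 2 (x^2 + 1) (exp x - 1)] for [x >= 0], which follows from the
    second-order Taylor bound [exp x >= 1 + x + x^2/2]. *)

From Stdlib Require Import Reals Lra Psatz.
From Coquelicot Require Import Coquelicot.
Open Scope R_scope.

Lemma exp_ge_taylor2 (x : R) : 0 <= x -> 1 + x + x ^ 2 / 2 <= exp x.
Proof.
  intros hx. destruct (Req_dec x 0) as [->|hx0].
  { rewrite exp_0. lra. }
  destruct (MVT_cor2 (fun y => exp y - y - y ^ 2 / 2) (fun y => exp y - 1 - y) 0 x)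
    as [c [hc hc_range]].
  - lra.
  - intros c _. apply is_derive_Reals. auto_derive; auto. lra.
  - rewrite exp_0 in hc. pose proof (exp_ineq1_le c). nra.
Qed.

Lemma exp_add1_le_sub1 (x : R) : 0 <= x ->
  x * (exp x + 1) <= 2 * (x ^ 2 + 1) * (exp x - 1).
Proof.
  intros hx. pose proof (exp_ge_taylor2 x hx) as htaylor.
  (* multiplying the Taylor bound by [2 x^2 - x + 2 > 0] leaves a surplus of [x^4 + 3/2 x^3] *)
  assert (0 <= (exp x - (1 + x + x ^ 2 / 2)) * (2 * x ^ 2 - x + 2)) by
    (apply Rmult_le_pos; nra).
  nra.
Qed.

Lemma ln_sub_mul_sub_le_lt (a b : R) : 0 < a -> a < b ->
  (ln b - ln a) * (b - a) <= ((ln b - ln a) ^ 2 + 4) * (sqrt b - sqrt a) ^ 2.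
Proof.
  intros ha hab.
  set (p := sqrt a). set (q := sqrt b).
  assert (hp : 0 < p) by (apply sqrt_lt_R0; lra).
  assert (hpq : p < q) by (apply sqrt_lt_1_alt; lra).
  assert (ea : a = p * p) by (unfold p; rewrite sqrt_sqrt; lra).
  assert (eb : b = q * q) by (unfold q; rewrite sqrt_sqrt; lra).
  set (x := ln q - ln p).
  assert (hx : 0 <= x) by (pose proof (ln_increasing p q hp hpq); unfold x; lra).
  assert (hexp : exp x = q / p).
  { unfold x, Rminus. rewrite exp_plus, exp_Ropp, !exp_ln; [reflexivity | lra | lra]. }
  assert (ht : ln b - ln a = 2 * x).
  { unfold x. rewrite ea, eb, !ln_mult by lra. ring. }
  pose proof (exp_add1_le_sub1 x hx) as hkey. rewrite hexp in hkey.
  assert (hkey' : x * (q + p) <= 2 * (x ^ 2 + 1) * (q - p)).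
  { apply Rmult_le_reg_r with (/ p); [apply Rinv_0_lt_compat; lra |].
    replace (x * (q + p) * / p) with (x * (q / p + 1)) by (field; lra).
    replace (2 * (x ^ 2 + 1) * (q - p) * / p) with (2 * (x ^ 2 + 1) * (q / p - 1))
      by (field; lra).
    exact hkey. }
  rewrite ht, ea, eb.
  replace (2 * x * (q * q - p * p)) with (2 * (q - p) * (x * (q + p))) by ring.
  replace (((2 * x) ^ 2 + 4) * (q - p) ^ 2) with (2 * (q - p) * (2 * (x ^ 2 + 1) * (q - p)))
    by ring.
  apply Rmult_le_compat_l; lra.
Qed.

Lemma ln_sub_mul_sub_le (a b : R) : 0 < a -> 0 < b ->
  (ln b - ln a) * (b - a) <= ((ln b - ln a) ^ 2 + 4) * (sqrt b - sqrt a) ^ 2.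
Proof.
  intros ha hb. destruct (Rtotal_order a b) as [hab | [<- | hba]].
  - exact (ln_sub_mul_sub_le_lt a b ha hab).
  - replace (ln a - ln a) with 0 by ring. nra.
  - pose proof (ln_sub_mul_sub_le_lt b a hb hba) as h. nra.
Qed.

Lemma gamma_coef_mul_logmean (a b : R) : 0 < a -> 0 < b ->
  gamma_coef a b * logmean a b = (ln b - ln a) * (b - a) / (2 * ((ln b - ln a) ^ 2 + 4)).
Proof.
  intros ha hb. unfold gamma_coef, logmean. rewrite ln_div by lra.
  destruct (Req_EM_T a b) as [<- | hab].
  - replace (ln a - ln a) with 0 by ring. field.
  - assert (ln b - ln a <> 0).
    { intros e. apply hab, ln_inv; lra. }
    field. nra.
Qed.

Lemma amean_sub_gmean (a b : R) : 0 <= a -> 0 <= b ->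
  amean a b - gmean a b = (sqrt b - sqrt a) ^ 2 / 2.
Proof.
  intros ha hb. unfold amean, gmean. rewrite sqrt_mult by assumption.
  rewrite <- (sqrt_sqrt a ha) at 1. rewrite <- (sqrt_sqrt b hb) at 1.
  field.
Qed.

Theorem corollary2p5 (a b : R) (ha : 0 < a) (hb : 0 < b) :
  gmean a b + gamma_coef a b * logmean a b <= amean a b.
Proof.
  rewrite gamma_coef_mul_logmean by assumption.
  assert (hdiff := amean_sub_gmean a b ltac:(lra) ltac:(lra)).
  assert (hkey := ln_sub_mul_sub_le a b ha hb).
  set (t := ln b - ln a) in *.
  assert (ht : 0 < 2 * (t ^ 2 + 4)) by nra.
  apply Rmult_le_compat_r with (r := / (2 * (t ^ 2 + 4))) in hkey;
    [| apply Rlt_le, Rinv_0_lt_compat, ht].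
  replace (((t ^ 2 + 4) * (sqrt b - sqrt a) ^ 2) * / (2 * (t ^ 2 + 4)))
    with ((sqrt b - sqrt a) ^ 2 / 2) in hkey by (field; lra).
  lra.
Qed.
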